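(* Let $A\in\mathbb{R}^{n\times n}$, $B\in\mathbb{R}^{n\times m}$, $C\in\mathbb{R}^{m\times n}$, $D\in\mathbb{R}^{m\times m}$ with $D=-D^T$ and $\operatorname{rank}B=r$, and consider the system $\dot x=Ax+Bu$, $y=Cx+Du$. Let $\tilde N_B,\tilde N_C\in\mathbb{R}^{n\times(n-r)}$ have columns spanning $\operatorname{Ker}B^T$ and $\operatorname{Ker}C$, respectively, with $\tilde N_B^T\tilde N_C=I$. Then the system is equivalent to a port-Hamiltonian system if and only if (1) $\operatorname{Ker}C^T=\operatorname{Ker}B$, $\operatorname{rank}(CB)=r$, and $CB$ is symmetric positive semidefinite; and (2) with an orthogonal $V\in\mathbb{R}^{m\times m}$ such that $BV=[B_1\;\;0]$, $C^TV=[C_1^T\;\;0]$, $B_1,C_1^T\in\mathbb{R}^{n\times r}$ of full column rank, $C_1B_1=YY^T$ with $Y\in\mathbb{R}^{r\times r}$ invertible, and with $$T_0=\begin{bmatrix}\tilde N_B^T\\ Y^{-1}C_1\end{bmatrix},\qquad T_0^{-1}=\begin{bmatrix}\tilde N_C & B_1Y^{-T}\end{bmatrix},$$ there exists an invertible matrix $Z\in\mathbb{R}^{(n-r)\times(n-r)}$ such that $$\begin{bmatrix}Z&0\\0&I\end{bmatrix}T_0AT_0^{-1}\begin{bmatrix}Z^{-1}&0\\0&I\end{bmatrix}+\left(\begin{bmatrix}Z&0\\0&I\end{bmatrix}T_0AT_0^{-1}\begin{bmatrix}Z^{-1}&0\\0&I\end{bmatrix}\right)^T$$ is negative semidefinit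e.
   Context: A PH system is $\dot\xi=(J-R)Q\xi+(F-P)\varphi$, $\eta=(F+P)^TQ\xi+(S+N)\varphi$ with $J,R,Q\in\mathbb{R}^{n\times n}$, $F,P\in\mathbb{R}^{n\times m}$, $S,N\in\mathbb{R}^{m\times m}$, $J=-J^T$, $R=R^T$, $Q=Q^T$ positive definite, $S=S^T$, $N=-N^T$, and $\begin{bmatrix}R&P\\P^T&S\end{bmatrix}$ symmetric positive semidefinite. The system $\dot x=Ax+Bu$, $y=Cx+Du$ is equivalent to a PH system if there exist invertible $V'\in\mathbb{R}^{m\times m}$, $T\in\mathbb{R}^{n\times n}$ such that the substitution $u=V'\varphi$, $\eta=V'^Ty$, $x=T\xi$ transforms it into a PH system, i.e. $T^{-1}AT=(J-R)Q$, $T^{-1}BV'=F-P$, $V'^TCT=(F+P)^TQ$, $V'^TDV'=S+N$. (Under (1), the matrix $T_0$ in (2) is invertible with the displayed inverse.) *)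

From HB Require Import structures.
From mathcomp Require Import all_boot all_order all_algebra.
Set Implicit Arguments. Unset Strict Implicit. Unset Printing Implicit Defensive.
Import Order.TTheory GRing.Theory Num.Theory.
Local Open Scope ring_scope.

Section Defs.
Variable R : numFieldType.

Definition sym_psd n (M : 'M[R]_n) : Prop :=
  M^T = M /\ forall x : 'cV[R]_n, 0 <= (x^T *m M *m x) 0 0.

Definition sym_pd n (M : 'M[R]_n) : Prop :=
  M^T = M /\ forall x : 'cV[R]_n, x != 0 -> 0 < (x^T *m M *m x) 0 0.

Definition nsd n (M : 'M[R]_n) : Prop :=
  forall x : 'cV[R]_n, (x^T *m M *m x) 0 0 <= 0.

(* colker X : a matrix whose row space is { x^T | X *m x = 0 }, i.e. the
   (transposed) kernel Ker X of X acting on column vectors. *)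
Definition colker l n (X : 'M[R]_(l, n)) : 'M[R]_n := kermx X^T.

Definition cols_span_ker n k l (N : 'M[R]_(n, k)) (X : 'M[R]_(l, n)) : bool :=
  (N^T == colker X)%MS.

Definition PH_structure n m (J Rm Q : 'M[R]_n) (F P : 'M[R]_(n, m))
    (S N : 'M[R]_m) : Prop :=
  [/\ J^T = - J, sym_pd Q, S^T = S, N^T = - N
    & sym_psd (block_mx Rm P P^T S)].
(* (R = R^T is part of sym_psd of the block matrix.) *)

(* The system x' = Ax + Bu, y = Cx + Du is equivalent to a PH system:
   there are invertible V', T with u = V' phi, eta = V'^T y, x = T xi
   transforming it into a PH system. *)
Definition equiv_PH n m (A : 'M[R]_n) (B : 'M[R]_(n, m)) (C : 'M[R]_(m, n))
    (D : 'M[R]_m) : Prop :=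
  exists (V' : 'M[R]_m) (T : 'M[R]_n),
    V' \in unitmx /\ T \in unitmx /\
    exists (J Rm Q : 'M[R]_n) (F P : 'M[R]_(n, m)) (S N : 'M[R]_m),
      [/\ PH_structure J Rm Q F P S N,
          invmx T *m A *m T = (J - Rm) *m Q,
          invmx T *m B *m V' = F - P,
          V'^T *m C *m T = (F + P)^T *m Q
        & V'^T *m D *m V' = S + N].

End Defs.

(* For skew-symmetric D, being equivalent to a port-Hamiltonian system amounts
   to having a solution X > 0 of the KYP conditions C = B^T X and
   X A + A^T X <= 0: take Q = X and let J - R be the skew/symmetric splitting of
   A X^-1; conversely, skewness of D forces S = 0, hence P = 0, and
   X = T^-T Q T^-1 works.  Given such an X, condition (1) holds because
   C B = B^T X B, and (2) holds with Z^T Z = NC^T X NC (Cholesky): then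
   W = T0^-1 diag(Z^-1, I) satisfies W^T X W = I, so the transformed matrix is
   W^T (X A) W.  Conversely, (1) yields an orthogonal V compressing B and C
   and a Cholesky factor Y of C1 B1; then the Z of (2) gives the solution
   X = W'^T W' with W' = diag(Z, I) T0. *)

From HB Require Import structures.
From mathcomp Require Import all_boot all_order all_algebra.
From mathcomp Require Import ring lra zify.
Set Implicit Arguments. Unset Strict Implicit. Unset Printing Implicit Defensive.
Import Order.TTheory GRing.Theory Num.Theory.
Local Open Scope ring_scope.

Section QuadraticForm.
Variable R : comPzRingType.

Definition qform n (M : 'M[R]_n) (x : 'cV[R]_n) : R := (x^T *m M *m x) 0 0.

Lemma qform_tr n (M : 'M[R]_n) x : qform M^T x = qform M x.
Proof.
by rewrite /qform -[in LHS](trmxK x) -!trmx_mul mulmxA trmxK mxE.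
Qed.

Lemma qformD n (M N : 'M[R]_n) x : qform (M + N) x = qform M x + qform N x.
Proof. by rewrite /qform mulmxDr mulmxDl mxE. Qed.

Lemma qformN n (M : 'M[R]_n) x : qform (- M) x = - qform M x.
Proof. by rewrite /qform mulmxN mulNmx mxE. Qed.

Lemma qformZ n a (M : 'M[R]_n) x : qform (a *: M) x = a * qform M x.
Proof. by rewrite /qform -scalemxAr -scalemxAl mxE. Qed.

Lemma qform0 n (M : 'M[R]_n) : qform M 0 = 0.
Proof. by rewrite /qform mulmx0 mxE. Qed.

Lemma qform_congr m n (G : 'M[R]_(m, n)) (M : 'M[R]_m) x :
  qform (G^T *m M *m G) x = qform M (G *m x).
Proof. by rewrite /qform trmx_mul !mulmxA. Qed.

Lemma qform_block_diag a b (M : 'M[R]_a) (N : 'M[R]_b) u v :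
  qform (block_mx M 0 0 N) (col_mx u v) = qform M u + qform N v.
Proof.
by rewrite /qform tr_col_mx mul_row_block !mulmx0 addr0 add0r mul_row_col mxE.
Qed.

Lemma qform_sym_shift n (M : 'M[R]_n) x y t : M^T = M ->
  qform M (x + t *: y) =
  qform M x + (t * (y^T *m M *m x) 0 0) *+ 2 + t ^+ 2 * qform M y.
Proof.
move=> Msym; have cross : x^T *m M *m y = y^T *m M *m x.
  rewrite -{1}Msym -[y]trmxK -!trmx_mul trmxK mulmxA.
  by rewrite [y^T *m M *m x]mx11_scalar tr_scalar_mx.
rewrite /qform; have -> : (x + t *: y)^T = x^T + t *: y^T.
  by rewrite linearD /= linearZ.
rewrite !mulmxDl !mulmxDr -!scalemxAl -!scalemxAr cross.
set a := x^T *m M *m x; set b := y^T *m M *m x; set c := y^T *m M *m y.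
rewrite !mxE; ring.
Qed.

Lemma ulsubmx_congr a b (M : 'M[R]_(a + b)) :
  ulsubmx M = (col_mx 1%:M 0)^T *m M *m col_mx 1%:M 0.
Proof.
by rewrite tr_col_mx trmx1 trmx0 -[M in RHS]submxK mul_row_block !mul1mx
  !mul0mx !addr0 mul_row_col mulmx1 mulmx0 addr0.
Qed.

Lemma drsubmx_congr a b (M : 'M[R]_(a + b)) :
  drsubmx M = (col_mx 0 1%:M)^T *m M *m col_mx 0 1%:M.
Proof.
by rewrite tr_col_mx trmx1 trmx0 -[M in RHS]submxK mul_row_block !mul1mx
  !mul0mx !add0r mul_row_col mulmx1 mulmx0 add0r.
Qed.

End QuadraticForm.

Section SchurComplement.
Variable R : comUnitRingType.

Lemma unitmx_mulmx_eq0 m n (G : 'M[R]_m) (x : 'M[R]_(m, n)) :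
  G \in unitmx -> G *m x = 0 -> x = 0.
Proof. by move=> Gu /(congr1 (mulmx (invmx G))); rewrite mulKmx // mulmx0. Qed.

Definition schur_complement a b (M : 'M[R]_(a + b)) : 'M[R]_b :=
  drsubmx M - dlsubmx M *m invmx (ulsubmx M) *m ursubmx M.

Definition schur_elim a b (M : 'M[R]_(a + b)) : 'M[R]_(a + b) :=
  block_mx 1%:M 0 (- (dlsubmx M *m invmx (ulsubmx M))) 1%:M.

Lemma schur_elim_unit a b (M : 'M[R]_(a + b)) : schur_elim M \in unitmx.
Proof. by rewrite unitmxE det_lblock !det1 mulr1 unitr1. Qed.

Lemma schur_elimP a b (M : 'M[R]_(a + b)) : M^T = M -> ulsubmx M \in unitmx ->
  schur_elim M *m M *m (schur_elim M)^T =
  block_mx (ulsubmx M) 0 0 (schur_complement M).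
Proof.
move=> Msym Mu; set ul := ulsubmx M.
have ul_sym : ul^T = ul by rewrite /ul trmx_ulsub Msym.
have ur_dl : ursubmx M = (dlsubmx M)^T by rewrite trmx_dlsub Msym.
rewrite /schur_elim /schur_complement -/ul -{2}[M]submxK -/ul ur_dl.
set dl := dlsubmx M; set dr := drsubmx M.
rewrite tr_block_mx !trmx1 trmx0 !mulmx_block !mul1mx !mul0mx !mulmx1 !mulmx0.
have elim_dl : - (dl *m invmx ul) *m ul + dl = 0.
  by rewrite mulNmx -mulmxA mulVmx // mulmx1 addNr.
have elim_ur : ul *m (- (dl *m invmx ul))^T + dl^T = 0.
  by move/(congr1 trmx): elim_dl; rewrite linearD /= trmx_mul ul_sym trmx0.
by rewrite !addr0 elim_dl elim_ur mul0mx add0r mulNmx addrC.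
Qed.

End SchurComplement.

Section Kernels.
Variable R : numFieldType.

Lemma mxrank_eq_kermx m n1 n2 (M1 : 'M[R]_(m, n1)) (M2 : 'M[R]_(m, n2)) :
  (kermx M1 == kermx M2)%MS -> \rank M1 = \rank M2.
Proof.
move=> /eqmx_rank; rewrite !mxrank_ker.
by have := rank_leq_row M1; have := rank_leq_row M2; lia.
Qed.

Lemma cols_span_ker_mul0 n k l (N : 'M[R]_(n, k)) (X : 'M[R]_(l, n)) :
  cols_span_ker N X -> X *m N = 0.
Proof.
move=> /andP[+ _]; rewrite sub_kermx => /eqP/(congr1 trmx).
by rewrite trmx_mul !trmxK trmx0.
Qed.

End Kernels.

Section Definiteness.
Variable R : realFieldType.

Lemma sqnorm_ge0 n (x : 'cV[R]_n) : 0 <= (x^T *m x) 0 0.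
Proof. by rewrite mxE; apply: sumr_ge0 => i _; rewrite mxE -expr2 sqr_ge0. Qed.

Lemma sqnorm_eq0 n (x : 'cV[R]_n) : ((x^T *m x) 0 0 == 0) = (x == 0).
Proof.
apply/idP/eqP => [|->]; last by rewrite mulmx0 mxE.
rewrite mxE psumr_eq0 => [/allP x0|i _]; last by rewrite mxE -expr2 sqr_ge0.
apply/matrixP => i j; rewrite (ord1 j) !mxE.
have /implyP/(_ isT) := x0 i (mem_index_enum _).
by rewrite mxE mulf_eq0 orbb => /eqP.
Qed.

Lemma sqnorm_gt0 n (x : 'cV[R]_n) : x != 0 -> 0 < (x^T *m x) 0 0.
Proof. by rewrite lt_def sqnorm_eq0 sqnorm_ge0 andbT. Qed.

Lemma nsd_qformE n (M : 'M[R]_n) : nsd (M + M^T) <-> forall x, qform M x <= 0.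
Proof.
split=> Mx x; have := Mx x; rewrite -/(qform _ x) qformD qform_tr; lra.
Qed.

Lemma qform_skew n (J : 'M[R]_n) x : J^T = - J -> qform J x = 0.
Proof. by move=> Jskew; have := qform_tr J x; rewrite Jskew qformN; lra. Qed.

Lemma quadratic_ge0_lin_coef (a b : R) :
  0 <= b -> (forall t, 0 <= a * t + b * t ^+ 2) -> a = 0.
Proof.
move=> b0 ge0; have b1 : 0 < b + 1 by lra.
have := ge0 (- a / (b + 1)).
have -> : a * (- a / (b + 1)) + b * (- a / (b + 1)) ^+ 2 =
          - (a ^+ 2 * (b + 1)^-1 ^+ 2) by field; lra.
rewrite oppr_ge0 => a2.
have : a ^+ 2 * (b + 1)^-1 ^+ 2 == 0.
  by rewrite eq_le a2 mulr_ge0 ?sqr_ge0.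
by rewrite mulf_eq0 sqrf_eq0 sqrf_eq0 invr_eq0 (gt_eqF b1) orbF => /eqP.
Qed.

Lemma sym_psd_ker n (M : 'M[R]_n) x : sym_psd M -> qform M x = 0 -> M *m x = 0.
Proof.
move=> [Msym Mpsd] Mx0.
have cross (y : 'cV[R]_n) : (y^T *m M *m x) 0 0 = 0.
  suff: (y^T *m M *m x) 0 0 *+ 2 = 0 by move/eqP; rewrite mulrn_eq0 /= => /eqP.
  apply: (@quadratic_ge0_lin_coef _ (qform M y) (Mpsd y)) => t.
  have := Mpsd (x + t *: y); rewrite -/(qform _ _) qform_sym_shift // Mx0 add0r.
  by rewrite mulrnAl [t * _]mulrC [_ * qform _ _]mulrC.
apply/eqP; rewrite -sqnorm_eq0; apply/eqP.
by rewrite -[RHS](cross (M *m x)) trmx_mul Msym !mulmxA.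
Qed.

Lemma sym_psd_congr m n (G : 'M[R]_(m, n)) (M : 'M[R]_m) :
  sym_psd M -> sym_psd (G^T *m M *m G).
Proof.
move=> [Msym Mpsd]; split; first by rewrite !trmx_mul trmxK Msym mulmxA.
by move=> x; have := Mpsd (G *m x); rewrite -!/(qform _ _) qform_congr.
Qed.

Lemma sym_pd_congr m n (G : 'M[R]_(m, n)) (M : 'M[R]_m) :
  (forall x : 'cV[R]_n, G *m x = 0 -> x = 0) -> sym_pd M -> sym_pd (G^T *m M *m G).
Proof.
move=> Ginj [Msym Mpd]; split; first by rewrite !trmx_mul trmxK Msym mulmxA.
move=> x x0; rewrite -/(qform _ _) qform_congr Mpd //.
by apply: contraNneq x0 => /Ginj ->.
Qed.

Lemma sym_pd_gram m n (G : 'M[R]_(m, n)) :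
  (forall x : 'cV[R]_n, G *m x = 0 -> x = 0) -> sym_pd (G^T *m G).
Proof.
move=> Ginj; split; first by rewrite trmx_mul trmxK.
move=> x x0; rewrite mulmxA -trmx_mul -mulmxA.
by rewrite sqnorm_gt0 //; apply: contraNneq x0 => /Ginj ->.
Qed.

Lemma sym_pd_unit n (M : 'M[R]_n) : sym_pd M -> M \in unitmx.
Proof.
move=> [Msym Mpd]; rewrite -row_free_unit; apply: inj_row_free => v vM0.
apply/eqP; rewrite -trmx_eq0; apply: contraT => /Mpd.
by rewrite trmxK -mulmxA -Msym -trmx_mul vM0 trmx0 mulmx0 mxE ltxx.
Qed.

Lemma sym_psd_unit_pd n (M : 'M[R]_n) : sym_psd M -> M \in unitmx -> sym_pd M.
Proof.
move=> Mpsd Mu; split=> [|x x0]; first exact: Mpsd.1.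
rewrite lt_def Mpsd.2 andbT; apply: contra x0 => /eqP/(sym_psd_ker Mpsd).
by move/(unitmx_mulmx_eq0 Mu) => ->.
Qed.

Lemma sym_pd_ulsub a b (M : 'M[R]_(a + b)) : sym_pd M -> sym_pd (ulsubmx M).
Proof.
rewrite ulsubmx_congr.
apply: sym_pd_congr => x; rewrite mul_col_mx mul1mx mul0mx => /eqP.
by rewrite col_mx_eq0 => /andP[/eqP].
Qed.

Lemma sym_pd_drsub a b (M : 'M[R]_(a + b)) : sym_pd M -> sym_pd (drsubmx M).
Proof.
rewrite drsubmx_congr.
apply: sym_pd_congr => x; rewrite mul_col_mx mul1mx mul0mx => /eqP.
by rewrite col_mx_eq0 => /andP[_ /eqP].
Qed.

Lemma mxrank_congr_pd m n (G : 'M[R]_(m, n)) (X : 'M[R]_m) :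
  sym_pd X -> \rank (G^T *m X *m G) = \rank G.
Proof.
move=> Xpd; rewrite -(mxrank_tr G); apply: mxrank_eq_kermx.
apply/andP; split; rewrite sub_kermx; last by rewrite !mulmxA mulmx_ker !mul0mx.
apply/eqP/row_matrixP => i; rewrite row0 row_mul.
set u := row i _; have uK : u *m (G^T *m X *m G) = 0.
  by rewrite /u -row_mul mulmx_ker row0.
apply/eqP; rewrite -trmx_eq0 trmx_mul trmxK; apply: contraT => /(Xpd.2).
rewrite trmx_mul trmxK.
have -> : u *m G^T *m X *m (G *m u^T) = u *m (G^T *m X *m G) *m u^T.
  by rewrite !mulmxA.
by rewrite uK mul0mx mxE ltxx.
Qed.

End Definiteness.

Section Compression.
Variable R : realFieldType.

Lemma compress_lsubmx n r p (B : 'M[R]_(n, r + p)) (V : 'M[R]_(r + p)) B1 :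
  B *m V = row_mx B1 0 -> B1 = B *m lsubmx V.
Proof. by rewrite mulmx_lsub => ->; rewrite row_mxKl. Qed.

Lemma decompress_lsubmx n r p (B : 'M[R]_(n, r + p)) (V : 'M[R]_(r + p)) B1 :
  B *m V = row_mx B1 0 -> V *m V^T = 1%:M -> B = B1 *m (lsubmx V)^T.
Proof.
move=> BV VVt; rewrite -[B]mulmx1 -VVt mulmxA BV -[V in V^T]hsubmxK tr_row_mx.
by rewrite mul_row_col mul0mx addr0.
Qed.

Lemma mxrank_compress n r p (B : 'M[R]_(n, r + p)) (V : 'M[R]_(r + p)) B1 :
  V \in unitmx -> B *m V = row_mx B1 0 -> \rank B1 = \rank B.
Proof. by move=> Vu BV; rewrite -(rank_row_mx0 p) -BV mxrankMfree ?row_free_unit. Qed.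

Lemma sym_pd_compress n r p (B : 'M[R]_(n, r + p)) (C : 'M[R]_(r + p, n))
    (V : 'M[R]_(r + p)) B1 C1 :
  V \in unitmx -> B *m V = row_mx B1 0 -> C^T *m V = row_mx C1^T 0 ->
  \rank (C *m B) = r -> sym_psd (C *m B) -> sym_pd (C1 *m B1).
Proof.
move=> Vu BV CV rankCB CBpsd; apply: sym_psd_unit_pd.
  have -> : C1 *m B1 = (lsubmx V)^T *m (C *m B) *m lsubmx V.
    rewrite (compress_lsubmx BV) -[C1]trmxK (compress_lsubmx CV).
    by rewrite trmx_mul trmxK !mulmxA.
  exact: sym_psd_congr.
have VCBV : V^T *m (C *m B) *m V = block_mx (C1 *m B1) 0 0 0.
  rewrite mulmxA -(trmxK C) -trmx_mul CV -mulmxA BV tr_row_mx trmxK trmx0.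
  by rewrite mul_col_row !mulmx0 !mul0mx.
rewrite -row_free_unit /row_free; apply/eqP.
have : \rank (V^T *m (C *m B) *m V) = r.
  rewrite mxrankMfree ?row_free_unit // -mxrank_tr trmx_mul trmxK.
  by rewrite mxrankMfree ?row_free_unit ?unitmx_tr // mxrank_tr.
by rewrite VCBV rank_diag_block_mx mxrank0 addn0.
Qed.

End Compression.

Section PortHamiltonian.
Variable R : realFieldType.

(* The KYP inequality of the system; since D + D^T = 0, its off-diagonal block
   must vanish, which is the condition C = B^T X. *)
Definition kyp_solution n m (A : 'M[R]_n) (B : 'M[R]_(n, m)) (C : 'M[R]_(m, n))
    (X : 'M[R]_n) : Prop :=
  [/\ sym_pd X, C = B^T *m X & forall x, qform (X *m A) x <= 0].

Lemma PH_skew_feedthrough n m (J Rm Q : 'M[R]_n) (F P : 'M[R]_(n, m))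
    (S N : 'M[R]_m) :
  PH_structure J Rm Q F P S N -> (S + N)^T = - (S + N) -> S = 0 /\ P = 0.
Proof.
move=> [_ _ Ssym Nskew RPpsd] SNskew.
have S0 : S = 0.
  move: SNskew; rewrite linearD /= Ssym Nskew => /matrixP SN.
  by apply/matrixP => i j; have := SN i j; rewrite !mxE; lra.
split=> //; rewrite S0 in RPpsd.
have Pv (v : 'cV[R]_m) : P *m v = 0.
  have /(sym_psd_ker RPpsd) : qform (block_mx Rm P P^T 0) (col_mx 0 v) = 0.
    by rewrite /qform tr_col_mx trmx0 mul_row_block mul_row_col !mul0mx !mulmx0
      !addr0 mul0mx add0r mxE.
  by rewrite mul_block_col !mulmx0 !add0r => /eqP; rewrite col_mx_eq0 => /andP[/eqP].
apply/matrixP => i j; have /matrixP/(_ i 0) := Pv (delta_mx j 0).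
by rewrite -colE !mxE.
Qed.

Lemma kyp_of_equiv_PH n m (A : 'M[R]_n) (B : 'M[R]_(n, m)) C D : D^T = - D ->
  equiv_PH A B C D -> exists X, kyp_solution A B C X.
Proof.
move=> Dskew [V' [T [V'u [Tu [J [Rm [Q [F [P [S [N [PH eA eB eC eD]]]]]]]]]]]].
have [S0 P0] : S = 0 /\ P = 0.
  apply: (PH_skew_feedthrough PH).
  by rewrite -eD !trmx_mul trmxK Dskew mulNmx mulmxN mulmxA.
move: PH eB eC => [Jskew Qpd _ _ RPpsd]; rewrite P0 subr0 addr0 => eB eC.
set Ti := invmx T.
exists (Ti^T *m Q *m Ti); split.
- apply: sym_pd_congr Qpd => x; apply: unitmx_mulmx_eq0.
  by rewrite unitmx_inv.
- have -> : C = invmx V'^T *m (V'^T *m C *m T) *m Ti.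
    by rewrite !mulmxA mulVmx ?unitmx_tr // mul1mx -mulmxA mulmxV // mulmx1.
  rewrite eC -eB !trmx_mul !mulmxA mulVmx ?unitmx_tr // mul1mx.
  by rewrite /Ti trmx_inv.
- move=> x; have TiA : Ti *m A = (J - Rm) *m Q *m Ti.
    by rewrite -eA -!mulmxA mulmxV // mulmx1.
  have -> : Ti^T *m Q *m Ti *m A = Ti^T *m (Q^T *m (J - Rm) *m Q) *m Ti.
    by rewrite -mulmxA TiA Qpd.1 !mulmxA.
  rewrite !qform_congr qformD qformN qform_skew // add0r oppr_le0.
  have Rpsd : sym_psd Rm.
    by rewrite -(block_mxKul Rm P P^T S) ulsubmx_congr; apply: sym_psd_congr.
  exact: Rpsd.2.
Qed.

Lemma equiv_PH_of_kyp n m (A : 'M[R]_n) (B : 'M[R]_(n, m)) C D X : D^T = - D ->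
  kyp_solution A B C X -> equiv_PH A B C D.
Proof.
move=> Dskew [Xpd eC XAnsd]; have Xu := sym_pd_unit Xpd.
(* Q = X, and J - R = A X^-1 split into its skew and symmetric parts. *)
set K := A *m invmx X; set Rm := - (2^-1 *: (K + K^T)).
have Rsym : Rm^T = Rm by apply/matrixP => i j; rewrite !mxE addrC.
have Jskew : (K + Rm)^T = - (K + Rm) by apply/matrixP => i j; rewrite !mxE; lra.
have qformK u : qform K u = qform (X *m A) (invmx X *m u).
  by rewrite -qform_congr trmx_inv Xpd.1 mulmxA mulVmx // mul1mx.
exists 1%:M, 1%:M; split; first exact: unitmx1.
split; first exact: unitmx1.
exists (K + Rm), Rm, X, B, 0, 0, D; split.
- split=> //; first by rewrite trmx0.
  split; first by rewrite tr_block_mx !trmx0 Rsym.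
  move=> x; rewrite -[x]vsubmxK -/(qform _ _) trmx0 qform_block_diag.
  rewrite {2}/qform mulmx0 mul0mx mxE addr0 qformN qformZ qformD qform_tr qformK.
  by have := XAnsd (invmx X *m usubmx x); lra.
- by rewrite invmx1 mul1mx mulmx1 addrK /K -mulmxA mulVmx // mulmx1.
- by rewrite invmx1 mul1mx mulmx1 subr0.
- by rewrite trmx1 mul1mx mulmx1 addr0.
- by rewrite trmx1 mul1mx mulmx1 add0r.
Qed.

Lemma equiv_PH_kyp n m (A : 'M[R]_n) (B : 'M[R]_(n, m)) C D : D^T = - D ->
  equiv_PH A B C D <-> exists X, kyp_solution A B C X.
Proof.
move=> Dskew; split; first exact: kyp_of_equiv_PH.
by move=> [X]; apply: equiv_PH_of_kyp.
Qed.

Lemma kyp_rank_sym_psd n m (A : 'M[R]_n) (B : 'M[R]_(n, m)) C X :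
  kyp_solution A B C X ->
  [/\ (colker C^T == colker B)%MS, \rank (C *m B) = \rank B & sym_psd (C *m B)].
Proof.
move=> [Xpd -> _]; rewrite /colker trmxK; split.
- have Xu := sym_pd_unit Xpd.
  apply/andP; split; rewrite sub_kermx; apply/eqP.
  + have := mulmx_ker (B^T *m X); rewrite mulmxA.
    by move/(congr1 (mulmx^~ (invmx X))); rewrite mulmxK // mul0mx.
  + by rewrite mulmxA mulmx_ker mul0mx.
- exact: mxrank_congr_pd.
- split; first by rewrite !trmx_mul trmxK Xpd.1 mulmxA.
  move=> x; rewrite -/(qform _ _) qform_congr.
  have [->|Bx0] := eqVneq (B *m x) 0; first by rewrite qform0.
  exact: ltW (Xpd.2 _ Bx0).
Qed.

End PortHamiltonian.

Section Cholesky.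
Variable R : rcfType.

Lemma cholesky n (M : 'M[R]_n) : sym_pd M -> exists2 Y, Y \in unitmx & M = Y *m Y^T.
Proof.
elim: n M => [|n IH] M Mpd.
  by exists 1%:M; rewrite ?unitmx1 // [M]flatmx0 [RHS]flatmx0.
move: M Mpd; rewrite -[n.+1]/(1 + n)%N => M Mpd.
set a := ulsubmx M; set E := schur_elim M.
have apd : sym_pd a := sym_pd_ulsub Mpd.
have EME : E *m M *m E^T = block_mx a 0 0 (schur_complement M).
  exact: schur_elimP Mpd.1 (sym_pd_unit apd).
have Et_inj (x : 'cV[R]_(1 + n)) : E^T *m x = 0 -> x = 0.
  by apply: unitmx_mulmx_eq0; rewrite unitmx_tr schur_elim_unit.
have [Y' Y'u eY'] : exists2 Y', Y' \in unitmx & schur_complement M = Y' *m Y'^T.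
  apply: IH; have := sym_pd_drsub (sym_pd_congr Et_inj Mpd).
  by rewrite trmxK EME block_mxKdr.
have a_gt0 : 0 < a 0 0.
  by have := apd.2 1%:M (oner_neq0 _); rewrite trmx1 mulmx1 mul1mx.
set s := Num.sqrt (a 0 0); pose L : 'M[R]_(1 + n) := block_mx s%:M 0 0 Y'.
have LLt : L *m L^T = block_mx a 0 0 (schur_complement M).
  rewrite tr_block_mx !trmx0 mulmx_block !mulmx0 !mul0mx !addr0 !add0r -eY'.
  by rewrite tr_scalar_mx -scalar_mxM -expr2 sqr_sqrtr ?ltW // -mx11_scalar.
exists (invmx E *m L).
  rewrite unitmx_mul unitmx_inv schur_elim_unit block_diag_mx_unit Y'u andbT.
  by rewrite unitmxE det_scalar1 unitfE sqrtr_eq0 -ltNge.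
rewrite trmx_mul -mulmxA (mulmxA L) LLt -EME trmx_inv !mulmxA.
rewrite mulVmx ?schur_elim_unit // mul1mx -mulmxA mulmxV ?mulmx1 //.
by rewrite unitmx_tr schur_elim_unit.
Qed.

Lemma mxrank_orthonormal s m (Q : 'M[R]_(s, m)) : Q *m Q^T = 1%:M -> \rank Q = s.
Proof.
move=> QQt; apply/eqP; rewrite eqn_leq rank_leq_row /=.
by rewrite -{1}(mxrank1 R s) -QQt mxrankM_maxl.
Qed.

Lemma orthonormal_row_base s m (K : 'M[R]_m) : \rank K = s ->
  exists2 Q : 'M[R]_(s, m), Q *m Q^T = 1%:M & (Q <= K)%MS.
Proof.
move=> <-; move: (row_base K) (row_base_free K) (eq_row_base K) => K' K'free K'K.
have K'_inj (x : 'cV[R]_(\rank K)) : K'^T *m x = 0 -> x = 0.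
  move=> /(congr1 trmx); rewrite trmx_mul trmxK trmx0 -(mul0mx _ K').
  by move/(row_free_inj K'free)/(congr1 trmx); rewrite trmxK trmx0.
have [L Lu eL] := cholesky (sym_pd_gram K'_inj); rewrite trmxK in eL.
exists (invmx L *m K'); last by rewrite (submx_trans (submxMl _ _)) ?K'K.
rewrite trmx_mul !mulmxA -(mulmxA (invmx L)) eL trmx_inv !mulmxA mulVmx // mul1mx.
by rewrite mulmxV // unitmx_tr.
Qed.

Lemma orthogonal_row_split r p (K : 'M[R]_(r + p)) : \rank K = p ->
  exists (P : 'M[R]_(r, r + p)) (Q : 'M[R]_(p, r + p)),
    [/\ (row_mx P^T Q^T)^T *m row_mx P^T Q^T = 1%:M,
        row_mx P^T Q^T *m (row_mx P^T Q^T)^T = 1%:M & (Q <= K)%MS].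
Proof.
move=> rankK; have [Q QQt QK] := orthonormal_row_base rankK.
have [P PPt] : exists2 P : 'M[R]_(r, r + p), P *m P^T = 1%:M & (P <= kermx Q^T)%MS.
  apply: orthonormal_row_base.
  by rewrite mxrank_ker mxrank_tr mxrank_orthonormal // addnK.
rewrite sub_kermx => /eqP PQt.
have QPt : Q *m P^T = 0 by rewrite -[Q]trmxK -trmx_mul PQt trmx0.
have VtV : (row_mx P^T Q^T)^T *m row_mx P^T Q^T = 1%:M.
  by rewrite tr_row_mx !trmxK mul_col_row PPt QQt PQt QPt -scalar_mx_block.
by exists P, Q; split; rewrite ?(mulmx1C VtV).
Qed.

End Cholesky.

Section OrthogonalCompression.
Variable R : rcfType.

Lemma compression_exists n r p (B : 'M[R]_(n, r + p)) (C : 'M[R]_(r + p, n)) :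
  \rank B = r -> (colker C^T == colker B)%MS ->
  \rank (C *m B) = r -> sym_psd (C *m B) ->
  exists (V : 'M[R]_(r + p)) (B1 : 'M[R]_(n, r)) (C1 : 'M[R]_(r, n)),
    [/\ V^T *m V = 1%:M, V *m V^T = 1%:M,
    B *m V = row_mx B1 0, C^T *m V = row_mx C1^T 0 & sym_pd (C1 *m B1)].
Proof.
rewrite /colker trmxK => rankB /andP[_ kerBC] rankCB CBpsd.
have [P [Q [VtV VVt QK]]] : exists (P : 'M_(r, r + p)) (Q : 'M_(p, r + p)),
    [/\ (row_mx P^T Q^T)^T *m row_mx P^T Q^T = 1%:M,
        row_mx P^T Q^T *m (row_mx P^T Q^T)^T = 1%:M & (Q <= kermx B^T)%MS].
  by apply: orthogonal_row_split; rewrite mxrank_ker mxrank_tr rankB addKn.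
have BQ : B *m Q^T = 0.
  move: QK; rewrite sub_kermx => /eqP/(congr1 trmx).
  by rewrite trmx_mul trmxK trmx0.
have CQ : C^T *m Q^T = 0.
  move: (submx_trans QK kerBC); rewrite sub_kermx => /eqP/(congr1 trmx).
  by rewrite trmx_mul trmx0.
have BV : B *m row_mx P^T Q^T = row_mx (B *m P^T) 0 by rewrite mul_mx_row BQ.
have CV : C^T *m row_mx P^T Q^T = row_mx (P *m C)^T 0 by rewrite mul_mx_row CQ trmx_mul.
exists (row_mx P^T Q^T), (B *m P^T), (P *m C); split=> //.
by apply: sym_pd_compress BV CV rankCB CBpsd; exact: (mulmx1_unit VtV).2.
Qed.

End OrthogonalCompression.

Section StateTransformation.
Variables (R : rcfType) (k r p : nat).
Variables (B : 'M[R]_(k + r, r + p)) (C : 'M[R]_(r + p, k + r)).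
Variables (NB NC : 'M[R]_(k + r, k)) (V : 'M[R]_(r + p)).
Variables (B1 : 'M[R]_(k + r, r)) (C1 : 'M[R]_(r, k + r)) (Y : 'M[R]_r).
Hypotheses (NB_B : NB^T *m B = 0) (C_NC : C *m NC = 0) (NB_NC : NB^T *m NC = 1%:M).
Hypotheses (BV : B *m V = row_mx B1 0) (CV : C^T *m V = row_mx C1^T 0).
Hypotheses (Yu : Y \in unitmx) (C1B1 : C1 *m B1 = Y *m Y^T).

Let T0 : 'M[R]_(k + r) := col_mx NB^T (invmx Y *m C1).
Let T0inv : 'M[R]_(k + r) := row_mx NC (B1 *m invmx Y^T).
Let scale (Z : 'M[R]_k) : 'M[R]_(k + r) := block_mx Z 0 0 1%:M.

Lemma C1_NC : C1 *m NC = 0.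
Proof. by rewrite -[C1]trmxK (compress_lsubmx CV) trmx_mul trmxK -mulmxA C_NC mulmx0. Qed.

Lemma T0_mulV : T0 *m T0inv = 1%:M.
Proof.
rewrite mul_col_row (scalar_mx_block k r); congr block_mx => //.
- by rewrite (compress_lsubmx BV) !mulmxA NB_B !mul0mx.
- by rewrite -mulmxA C1_NC mulmx0.
- rewrite !mulmxA -(mulmxA _ C1) C1B1 mulmxA mulVmx // mul1mx mulmxV //.
  by rewrite unitmx_tr.
Qed.

Lemma scale_unit Z : Z \in unitmx -> scale Z \in unitmx.
Proof. by move=> Zu; rewrite block_diag_mx_unit Zu unitmx1. Qed.

Lemma invmx_scale Z : Z \in unitmx -> invmx (scale Z) = block_mx (invmx Z) 0 0 1%:M.
Proof. by move=> Zu; rewrite invmx_block_diag ?scale_unit // invmx1. Qed.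

Lemma scaled_T0_mulV Z : Z \in unitmx ->
  (scale Z *m T0) *m (T0inv *m invmx (scale Z)) = 1%:M.
Proof.
move=> Zu; rewrite mulmxA -(mulmxA _ T0) T0_mulV mulmx1 mulmxV //.
exact: scale_unit.
Qed.

Lemma scale_gram Z : (scale Z)^T *m scale Z = block_mx (Z^T *m Z) 0 0 1%:M.
Proof.
by rewrite tr_block_mx !trmx0 trmx1 mulmx_block !mulmx0 !mul0mx !addr0 !add0r mulmx1.
Qed.

Lemma T0inv_congr X : X^T = X -> C = B^T *m X ->
  T0inv^T *m X *m T0inv = block_mx (NC^T *m X *m NC) 0 0 1%:M.
Proof.
move=> Xsym eC; have XB1 : X *m B1 = C1^T.
  have XB : X *m B = C^T by rewrite eC trmx_mul trmxK Xsym.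
  by rewrite (compress_lsubmx BV) mulmxA XB -(compress_lsubmx CV).
have B1X : B1^T *m X = C1 by rewrite -Xsym -trmx_mul XB1 trmxK.
rewrite tr_row_mx mul_col_mx mul_col_row; congr block_mx.
- by rewrite -!mulmxA (mulmxA X) XB1 mulmxA -trmx_mul C1_NC trmx0 mul0mx.
- by rewrite trmx_mul -!mulmxA (mulmxA B1^T) B1X C1_NC mulmx0.
- rewrite trmx_mul -!mulmxA (mulmxA B1^T) B1X (mulmxA C1) C1B1 trmx_inv trmxK.
  by rewrite !mulmxA mulVmx // mul1mx mulmxV // unitmx_tr.
Qed.

Lemma T0_scaling_of_kyp A X : kyp_solution A B C X ->
  exists Z : 'M[R]_k, Z \in unitmx /\
    nsd (scale Z *m (T0 *m A *m T0inv) *m block_mx (invmx Z) 0 0 1%:M +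
         (scale Z *m (T0 *m A *m T0inv) *m block_mx (invmx Z) 0 0 1%:M)^T).
Proof.
move=> [Xpd eC XAnsd].
have NC_inj (x : 'cV[R]_k) : NC *m x = 0 -> x = 0.
  by move=> NCx0; rewrite -[x]mul1mx -NB_NC -mulmxA NCx0 mulmx0.
have [L Lu eL] := cholesky (sym_pd_congr NC_inj Xpd).
have Zu : L^T \in unitmx by rewrite unitmx_tr.
exists L^T; split=> //; rewrite -invmx_scale //; apply/nsd_qformE => x.
set W := T0inv *m invmx (scale L^T).
have Su := scale_unit Zu.
have WXW : W^T *m X *m W = 1%:M.
  have -> : W^T *m X *m W =
      (invmx (scale L^T))^T *m (T0inv^T *m X *m T0inv) *m invmx (scale L^T).
    by rewrite /W trmx_mul !mulmxA.
  rewrite T0inv_congr ?Xpd.1 // eL.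
  rewrite -[X in block_mx (X *m _)]trmxK -scale_gram trmx_inv !mulmxA.
  by rewrite mulVmx ?unitmx_tr // mul1mx mulmxV.
have Wu : W \in unitmx := (mulmx1_unit WXW).2.
have eW' : scale L^T *m T0 = W^T *m X.
  apply: (@row_free_inj _ (k + r) _ _ W); first by rewrite row_free_unit.
  by rewrite /= scaled_T0_mulV ?WXW.
have -> : scale L^T *m (T0 *m A *m T0inv) *m invmx (scale L^T) =
          W^T *m (X *m A) *m W.
  by rewrite [W^T *m _]mulmxA -eW' /W !mulmxA.
by rewrite qform_congr XAnsd.
Qed.

Lemma kyp_of_T0_scaling A Z :
  V *m V^T = 1%:M -> (C *m B)^T = C *m B -> Z \in unitmx ->
  nsd (scale Z *m (T0 *m A *m T0inv) *m block_mx (invmx Z) 0 0 1%:M +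
       (scale Z *m (T0 *m A *m T0inv) *m block_mx (invmx Z) 0 0 1%:M)^T) ->
  kyp_solution A B C ((scale Z *m T0)^T *m (scale Z *m T0)).
Proof.
move=> VVt CBsym Zu; rewrite -invmx_scale // => /nsd_qformE Mnsd.
set W' := scale Z *m T0; set W := T0inv *m invmx (scale Z).
have WW' : W *m W' = 1%:M := mulmx1C (scaled_T0_mulV Zu).
have W'AW x : qform (W' *m A *m W) x <= 0.
  by move: (Mnsd x); rewrite /W' /W !mulmxA.
have W'c : W' = col_mx (Z *m NB^T) (invmx Y *m C1).
  by rewrite /W' /T0 /scale mul_block_col !mul0mx addr0 add0r mul1mx.
clearbody W' W; split.
- apply: sym_pd_gram => x W'x0.
  by rewrite -[x]mul1mx -WW' -mulmxA W'x0 mulmx0.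
- set L := lsubmx V.
  have eC : C = L *m C1.
    by rewrite -[C]trmxK (decompress_lsubmx CV VVt) trmx_mul !trmxK.
  have BC1 : B^T *m C1^T = L *m (Y *m Y^T).
    rewrite -C1B1 (compress_lsubmx CV) [LHS]mulmxA -trmx_mul CBsym -mulmxA.
    by rewrite -(compress_lsubmx BV) {1}eC mulmxA.
  have W'B : W' *m B = col_mx 0 (invmx Y *m C1 *m B).
    by rewrite W'c mul_col_mx -[Z *m _ *m B]mulmxA NB_B mulmx0.
  rewrite mulmxA -trmx_mul W'B {1}eC W'c tr_col_mx trmx0 mul_row_col mul0mx add0r.
  rewrite !trmx_mul !mulmxA BC1 trmx_inv !mulmxA mulmxK ?unitmx_tr //.
  by rewrite mulmxK.
- move=> x; have -> : W'^T *m W' *m A = W'^T *m (W' *m A *m W) *m W'.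
    by rewrite -!mulmxA WW' mulmx1.
  by rewrite qform_congr.
Qed.

End StateTransformation.

(* Dimensions: n = k + r (k = n - r), m = r + p (p = m - r). *)
Theorem corollary3p3 (R : rcfType) (k r p : nat)
    (A : 'M[R]_(k + r)) (B : 'M[R]_(k + r, r + p))
    (C : 'M[R]_(r + p, k + r)) (D : 'M[R]_(r + p)) :
  D = - D^T ->
  \rank B = r ->
  forall NB NC : 'M[R]_(k + r, k),
  cols_span_ker NB B^T ->
  cols_span_ker NC C ->
  NB^T *m NC = 1%:M ->
  equiv_PH A B C D <->
  ( (* (1) *)
    [/\ (colker C^T == colker B)%MS, \rank (C *m B) = r & sym_psd (C *m B)]
  /\ (* (2) *)
    forall (V : 'M[R]_(r + p)) (B1 : 'M[R]_(k + r, r)) (C1 : 'M[R]_(r, k + r))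
           (Y : 'M[R]_r),
      V^T *m V = 1%:M -> V *m V^T = 1%:M ->
      B *m V = row_mx B1 0 ->
      C^T *m V = row_mx C1^T 0 ->
      \rank B1 = r -> \rank C1^T = r ->
      Y \in unitmx -> C1 *m B1 = Y *m Y^T ->
      let T0 : 'M[R]_(k + r) := col_mx NB^T (invmx Y *m C1) in
      let T0inv : 'M[R]_(k + r) := row_mx NC (B1 *m invmx Y^T) in
      exists Z : 'M[R]_k, Z \in unitmx /\
        let M := block_mx Z 0 0 1%:M *m (T0 *m A *m T0inv)
                   *m block_mx (invmx Z) 0 0 1%:M in
        nsd (M + M^T)).
Proof.
move=> Dsym rankB NB NC NBspan NCspan NB_NC.
have Dskew : D^T = - D by rewrite {1}Dsym linearN /= trmxK.
have NB_B : NB^T *m B = 0.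
  by rewrite -[B]trmxK -trmx_mul (cols_span_ker_mul0 NBspan) trmx0.
have C_NC : C *m NC = 0 := cols_span_ker_mul0 NCspan.
rewrite equiv_PH_kyp //; split=> [[X kyp] | [[kerCB rankCB CBpsd] cond2]].
- have [kerCB rankCB CBpsd] := kyp_rank_sym_psd kyp.
  split=> [|V B1 C1 Y _ _ BV CV _ _ Yu C1B1 /=]; first by split=> //; rewrite rankCB.
  exact: T0_scaling_of_kyp NB_B C_NC NB_NC BV CV Yu C1B1 _ _ kyp.
- have [V [B1 [C1 [VtV VVt BV CV C1B1pd]]]] :=
    compression_exists rankB kerCB rankCB CBpsd.
  have Vu : V \in unitmx := (mulmx1_unit VtV).2.
  have rankC : \rank C^T = r.
    move: kerCB; rewrite /colker trmxK mxrank_tr => /mxrank_eq_kermx ->.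
    by rewrite mxrank_tr.
  have [Y Yu C1B1] := cholesky C1B1pd.
  have [Z [Zu nsdM]] := cond2 V B1 C1 Y VtV VVt BV CV
    (etrans (mxrank_compress Vu BV) rankB) (etrans (mxrank_compress Vu CV) rankC)
    Yu C1B1.
  eexists; exact: kyp_of_T0_scaling NB_B C_NC NB_NC BV CV Yu C1B1 _ _ VVt CBpsd.1 Zu nsdM.
Qed.
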